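(* Let $d\ge2$, let $\sigma:\mathbb R\to\mathbb R$ be a non-linear (not affine) Lipschitz function applied element-wise to vectors in $\mathbb R^d$, let $\mathscr A\subseteq\mathbb R^{d\times d}$, and consider the control family $$\mathcal F=\{x\mapsto W\sigma(Ax+b) : W\in\mathbb R^{d\times d}\text{ diagonal},\ A\in\mathscr A,\ b\in\mathbb R^d\}.$$ If for every $l=1,\dots,d$ the set $\{v\in\mathbb R^d : v \text{ is the } l\text{-th row of } A \text{ for some } A\in\mathscr A\}$ equals $\mathbb R^d$, then the control system with control family $\mathcal F$ possesses the universal interpolation property.
   Context: For $g\in\mathcal F$, $\varphi^g_t$ is the time-$t$ flow of $\dot x=g(x)$; $\mathcal A_{\mathcal F}$ is the set of all finite compositions $\varphi^{f_k}_{t_k}\circ\cdots\circ\varphi^{f_1}_{t_1}$, $f_i\in\mathcal F$, $t_i\ge0$. Universal interpolation property: for every $\varepsilon>0$, every $N$ and every data $(x_i,y_i)_{i=1}^N$ in $\mathbb R^d\times\mathbb R^d$ with $x_i\ne x_j$, $y_i\ne y_j$ for $i\ne j$, there is $\varphi\in\mathcal A_{\mathcal F}$ with $\|\varphi(x_i)-y_i\|_\infty\le\varepsilon$ for all $i$. *)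

From HB Require Import structures.
From mathcomp Require Import all_boot all_order all_algebra.
From mathcomp Require Import all_classical all_reals all_analysis.
Set Implicit Arguments. Unset Strict Implicit. Unset Printing Implicit Defensive.
Import Order.TTheory GRing.Theory Num.Theory.
Import numFieldNormedType.Exports.
Local Open Scope classical_set_scope.
Local Open Scope ring_scope.

Definition time_flow {R : realType} {d : nat}
    (g : 'cV[R]_d -> 'cV[R]_d) (t : R) (phi : 'cV[R]_d -> 'cV[R]_d) : Prop :=
  forall x : 'cV[R]_d, exists gamma : R -> 'cV[R]_d,
    gamma 0 = x /\ (forall s : R, is_derive s 1 gamma (g (gamma s))) /\
    phi x = gamma t.

Inductive in_AF {R : realType} {d : nat} (F : set ('cV[R]_d -> 'cV[R]_d)) :
    ('cV[R]_d -> 'cV[R]_d) -> Prop :=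
| AF_flow : forall g t phi, F g -> 0 <= t -> time_flow g t phi -> in_AF F phi
| AF_comp : forall psi g t phi, in_AF F psi -> F g -> 0 <= t ->
    time_flow g t phi -> in_AF F (phi \o psi).

Definition universal_interpolation {R : realType} {d : nat}
    (F : set ('cV[R]_d -> 'cV[R]_d)) : Prop :=
  forall (eps : R), 0 < eps -> forall (N : nat) (x y : 'I_N -> 'cV[R]_d),
    injective x -> injective y ->
    exists phi, in_AF F phi /\
      forall (i : 'I_N) (k : 'I_d), `|phi (x i) k ord0 - y i k ord0| <= eps.

Definition lipschitz_fun {R : realType} (s : R -> R) : Prop :=
  exists L : R, forall u v : R, `|s u - s v| <= L * `|u - v|.

Definition affine_fun {R : realType} (s : R -> R) : Prop :=
  exists a b : R, forall u : R, s u = a * u + b.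

Definition ctrl_family {R : realType} {d : nat} (sigma : R -> R)
    (AA : set 'M[R]_d) : set ('cV[R]_d -> 'cV[R]_d) :=
  [set f | exists (W : 'M[R]_d) (A : 'M[R]_d) (b : 'cV[R]_d),
     is_diag_mx W /\ AA A /\ f = (fun x => W *m map_mx sigma (A *m x + b))].

(* For j <> k the field x |-> al sigma(a x_j + b) e_k lies in the family and does
   not move x_j, so its flows are the shears x |-> x + t al sigma(a x_j + b) e_k;
   composing them adds h(x_j) e_k to x for every h in the span of the ridge
   functions t |-> sigma(a t + b).
   This span interpolates arbitrary values at finitely many distinct points.
   Otherwise a finitely supported measure mu = sum_p c_p delta_(t_p) with some
   nonzero mass annihilates every sigma(a . + b). Integrating sigma and
   differentiating in a shows that t mu annihilates the finite differences of
   sigma, hence t^m mu annihilates its m-fold differences; for an m such that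
   the m-th moment of mu is nonzero, every m-fold difference of the bounded
   function sigma(. + h) - sigma vanishes, so sigma has constant increments and,
   being Lipschitz, is affine.
   Shears then steer the data: a generic linear combination of the coordinates
   is added to coordinate k so that it separates the points; reading it, every
   other coordinate is set to its target; finally coordinate k is set by reading
   a second coordinate, in which the targets have been made distinct by a
   perturbation smaller than eps. *)

From HB Require Import structures.
From mathcomp Require Import all_boot all_order all_algebra.
From mathcomp Require Import all_classical all_reals all_analysis.
From mathcomp Require Import lra.
Set Implicit Arguments. Unset Strict Implicit. Unset Printing Implicit Defensive.
Import Order.TTheory GRing.Theory Num.Theory.
Import numFieldNormedType.Exports.
Local Open Scope classical_set_scope.
Local Open Scope ring_scope.

Section Primitive.
Context {R : realType}.
Notation mu := (@lebesgue_measure R).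

Definition primitive (g : R -> R) (c y : R) : R := \int[mu]_(t in `[c, y]) g t.

Lemma is_derive_primitive (g : R -> R) (c x : R) : continuous g -> c < x ->
  is_derive x 1 (primitive g c) (g x).
Proof.
move=> cg cx.
have [] := @continuous_FTC1_closed R g c x (x + 1) _ _ cx _.
- by rewrite ltrDl.
- apply: continuous_compact_integrable; first exact: segment_compact.
  by apply: continuous_subspaceT => z; apply: cg.
- exact: cg.
by move=> dx <-; rewrite derive1E; exact: derivableP.
Qed.

Lemma is_derive_sum_primitive (g : R -> R) (c x : R) (L : seq (R * R))
    (u : R * R -> R -> R) (du : R * R -> R) :
  continuous g ->
  (forall p, p \in L -> c < u p x /\ is_derive x 1 (u p) (du p)) ->
  is_derive x 1 (fun s => \sum_(p <- L) p.1 * primitive g c (u p s))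
    (\sum_(p <- L) p.1 * (g (u p x) * du p)).
Proof.
move=> cg uL; rewrite -fct_sumE big_seq [in X in is_derive _ _ _ X]big_seq.
elim/big_rec2: _ => [|p df f pL dfx]; first exact: is_derive_cst.
have [cu du_p] := uL p pL.
apply: is_deriveD dfx; apply: is_deriveZ.
exact: (is_derive1_comp (f := primitive g c) (is_derive_primitive cg cu)).
Qed.

Lemma is_derive0_segment_eq (f : R -> R) (u v : R) : u <= v ->
  (forall z, u <= z <= v -> is_derive z 1 f 0) -> f u = f v.
Proof.
move=> uv f'0.
have [] := @MVT_segment R f (fun=> 0) u v uv.
- by move=> z; rewrite in_itv /= => /andP[uz zv]; apply: f'0; rewrite !ltW.
- apply: (@derivable_within_continuous R R^o f `[u, v]%R) => z.
  by rewrite in_itv /= => /f'0 [].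
- by move=> z _ /eqP; rewrite mul0r subr_eq0 => /eqP.
Qed.

End Primitive.

Section Annihilation.
Context {R : realType}.

(* [L] encodes the measure sum_p p.1 delta_(p.2) on the line, and [mulX L] is
   the same measure multiplied by the coordinate t. *)
Definition annihilates (L : seq (R * R)) (g : R -> R) :=
  forall a b : R, \sum_(p <- L) p.1 * g (a * p.2 + b) = 0.

Definition fdiff (h : R) (g : R -> R) : R -> R := fun u => g (u + h) - g u.

Definition mulX (L : seq (R * R)) := [seq (p.1 * p.2, p.2) | p <- L].

Lemma exists_affine_lower_bound (L : seq (R * R)) (a0 b r : R) :
  exists c, forall p a z, p \in L -> `|a - a0| < 1 -> `|z - b| <= r ->
    c < a * p.2 + z.
Proof.
pose M := \sum_(p <- L) `|p.2|.
exists (b - r - 1 - (`|a0| + 1) * M) => p a z pL aa0 zb.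
have : `|a * p.2| <= (`|a0| + 1) * M.
  rewrite normrM; apply: ler_pM => //.
    by have := ler_normD a0 (a - a0); rewrite addrC subrK; lra.
  by rewrite /M (big_rem p pL) /= lerDl sumr_ge0.
by move: zb; rewrite !ler_norml => /andP[? _] /andP[? _]; lra.
Qed.

Lemma annihilates_primitive_eq (g : R -> R) (L : seq (R * R)) (c a u v : R) :
  continuous g -> annihilates L g -> u <= v ->
  (forall p z, p \in L -> u <= z <= v -> c < a * p.2 + z) ->
  \sum_(p <- L) p.1 * primitive g c (a * p.2 + u) =
  \sum_(p <- L) p.1 * primitive g c (a * p.2 + v).
Proof.
move=> cg gL uv c_lt.
pose F z := \sum_(p <- L) p.1 * primitive g c (a * p.2 + z); change (F u = F v).
apply: is_derive0_segment_eq => // z zuv; apply: is_derive_eq.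
  apply: (is_derive_sum_primitive (u := fun p z => a * p.2 + z) (du := fun=> 1))
    => // p pL.
  by split; [exact: c_lt | apply: is_derive_eq; rewrite add0r mulr1].
by under eq_bigr do rewrite /= mulr1; exact: gL.
Qed.

Lemma annihilates_fdiff (g : R -> R) (L : seq (R * R)) (h : R) :
  continuous g -> annihilates L g -> annihilates (mulX L) (fdiff h g).
Proof.
(* With G a primitive of g, P a s := sum_p c_p G(a t_p + b + s) does not depend
   on s, as its s-derivative is the relation itself; hence neither does its
   a-derivative at a0, which is sum_p c_p t_p g(a0 t_p + b + s). *)
move=> cg gL a0 b.
have [c c_lt] := exists_affine_lower_bound L a0 b `|h|.
pose P a s := \sum_(p <- L) p.1 * primitive g c (a * p.2 + (b + s)).
have P_eq a u v : `|a - a0| < 1 -> u <= v -> `|u| <= `|h| -> `|v| <= `|h| ->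
    P a u = P a v.
  move=> aa0 uv uh vh; apply: annihilates_primitive_eq; rewrite ?lerD2l //.
  move=> p z pL /andP[uz zv]; apply: c_lt => //.
  by move: uh vh; rewrite !ler_norml => /andP[? ?] /andP[? ?]; apply/andP; split; lra.
have P'0 : is_derive a0 1 (fun a => P a h - P a 0) 0.
  apply: (@near_eq_is_derive R R^o R^o (cst 0) _ a0 1 0).
  apply/nbhs_ballP; exists 1 => //= a; rewrite /ball /= distrC => aa0.
  have [h0 | h0] := leP 0 h; last by rewrite (P_eq a h 0) ?subrr ?normr0 // ltW.
  by rewrite (P_eq a 0 h) ?subrr ?normr0.
have P' s : `|s| <= `|h| ->
    is_derive a0 1 (P^~ s) (\sum_(p <- L) p.1 * (g (a0 * p.2 + (b + s)) * p.2)).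
  move=> sh; apply: is_derive_sum_primitive => // p pL; split.
    by apply: (c_lt _ _ _ pL); rewrite ?subrr ?normr0 // addrAC subrr add0r.
  by apply: is_derive_eq; rewrite scaler0 add0r addr0 [_%:A]mulr1.
have := is_deriveB (P' h (lexx _)) (P' 0 ltac:(by rewrite normr0)).
move=> [_]; case: P'0 => _ -> /esym/eqP; rewrite subr_eq0 addr0 => /eqP E.
rewrite big_map -[RHS](subrr (\sum_(p <- L) p.1 * (g (a0 * p.2 + b) * p.2))).
rewrite -[X in _ = X - _]E -sumrB; apply: eq_bigr => p _ /=.
by rewrite /fdiff addrA -mulrBr -mulrBl mulrA mulrAC.
Qed.


Fixpoint fdiffs (hs : seq R) (g : R -> R) : R -> R :=
  if hs is h :: hs' then fdiffs hs' (fdiff h g) else g.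

Lemma continuous_fdiff (h : R) (g : R -> R) : continuous g -> continuous (fdiff h g).
Proof.
move=> cg x; apply: cvgB; last exact: cg.
apply: continuous_comp; last exact: cg.
by apply: continuousD; [exact: cvg_id | exact: cst_continuous].
Qed.

Lemma annihilates_fdiffs (hs : seq R) (L : seq (R * R)) (g : R -> R) :
  continuous g -> annihilates L g ->
  annihilates (iter (size hs) mulX L) (fdiffs hs g).
Proof.
elim: hs L g => [|h hs IH] L g cg gL //=.
rewrite -iterS iterSr; apply: IH; first exact: continuous_fdiff.
exact: annihilates_fdiff.
Qed.

Lemma iter_mulX (m : nat) (L : seq (R * R)) :
  iter m mulX L = [seq (p.1 * p.2 ^+ m, p.2) | p <- L].
Proof.
elim: m => [|m IH] /=.
  by rewrite -[LHS]map_id; apply: eq_map => -[? ?]; rewrite mulr1.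
by rewrite IH /mulX -map_comp; apply: eq_map => -[c t]; rewrite /= exprSr mulrA.
Qed.

Lemma nat_mul_bounded_eq0 (c B : R) : (forall n : nat, `|n%:R * c| <= B) -> c = 0.
Proof.
move=> ncB; have B0 : 0 <= B by have := ncB 0%N; rewrite mul0r normr0.
apply/eqP/negPn/negP => c0; have c_gt0 : 0 < `|c| by rewrite normr_gt0.
have := archi_boundP (divr_ge0 B0 (ltW c_gt0)); rewrite ltr_pdivrMr //.
by have := ncB (Num.Def.archi_bound (B / `|c|)); rewrite normrM normr_nat; lra.
Qed.

Lemma fdiffs_eq0_const (m : nat) (g : R -> R) : (exists B, forall u, `|g u| <= B) ->
  (forall hs, size hs = m -> forall u, fdiffs hs g u = 0) -> forall u, g u = g 0.
Proof.
elim: m g => [|m IH] g [B gB] g0.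
  by move=> u; have /= g_0 := g0 [::] erefl; rewrite !g_0.
have g_shift h u : g (u + h) - g u = g h - g 0.
  have := IH (fdiff h g) _ _ u; rewrite /fdiff add0r; apply.
    exists (B + B) => v; apply: (le_trans (ler_normB _ _)); exact: lerD.
  by move=> hs shs; apply: (g0 (h :: hs)); rewrite /= shs.
move=> u; apply/eqP; rewrite -subr_eq0; apply/eqP.
apply: (@nat_mul_bounded_eq0 _ (B + B)) => n.
have -> : n%:R * (g u - g 0) = g (n%:R * u) - g 0.
  elim: n => [|n IHn]; first by rewrite !mul0r subrr.
  by rewrite -addn1 natrD !mulrDl !mul1r IHn; have := g_shift u (n%:R * u); lra.
by apply: (le_trans (ler_normB _ _)); exact: lerD.
Qed.

Lemma additive_lipschitz_linear (e : R -> R) (K : R) :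
  (forall u v, e (u + v) = e u + e v) -> (forall u, `|e u| <= K * `|u|) ->
  forall u, e u = u * e 1.
Proof.
move=> eD eK.
have e0 : e 0 = 0 by have := eD 0 0; rewrite addr0; lra.
have eMn (n : nat) u : e (n%:R * u) = n%:R * e u.
  by elim: n => [|n IHn]; rewrite ?mul0r ?e0 // -addn1 natrD !mulrDl !mul1r eD IHn.
have eN u : e (- u) = - e u by apply/eqP; rewrite -subr_eq0 opprK -eD addNr e0.
have eZ (z : int) : e z%:~R = z%:~R * e 1.
  case: z => n; first by rewrite -[n%:~R]mulr1 eMn mulr1.
  by rewrite NegzE !mulrNz eN mulNr -[_%:~R]mulr1 eMn mulr1.
move=> u; apply/eqP; rewrite -subr_eq0; apply/eqP.
apply: (@nat_mul_bounded_eq0 _ (K + `|e 1|)) => n.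
pose x := n%:R * u; have /andP[fl_le fl_gt] := floor_itv x.
have -> : n%:R * (e u - u * e 1) =
    e (x - (Num.floor x)%:~R) + ((Num.floor x)%:~R - x) * e 1.
  by rewrite mulrBl addrA -eZ -eD subrK /x eMn mulrBr mulrA.
apply: (le_trans (ler_normD _ _)); apply: lerD.
  apply: (le_trans (eK _)); rewrite ger0_norm ?subr_ge0 //.
  have K0 : 0 <= K by have := eK 1; rewrite normr1 mulr1; exact: le_trans.
  by rewrite -[leRHS]mulr1 ler_wpM2l //; lra.
by rewrite normrM ler_piMl // ler_norml; lra.
Qed.

Lemma lipschitz_continuous (s : R -> R) : lipschitz_fun s -> continuous s.
Proof.
move=> [K sK] x; apply/cvgrPdist_le => /= e e0.
have K1 : 0 < `|K| + 1 by rewrite ltr_pwDr // normr_ge0.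
apply/nbhs_ballP; exists (e / (`|K| + 1)); first exact: divr_gt0.
move=> y; rewrite /ball /= => xy; apply: (le_trans (sK x y)).
apply: (@le_trans _ _ ((`|K| + 1) * `|x - y|)).
  by apply: ler_wpM2r => //; have := real_ler_norm (num_real K); lra.
by rewrite -ler_pdivlMl // mulrC ltW.
Qed.

Lemma lipschitz_shift_affine (s : R -> R) : lipschitz_fun s ->
  (forall u h, s (u + h) - s u = s h - s 0) -> affine_fun s.
Proof.
move=> [K sK] s_shift; exists (s 1 - s 0), (s 0) => u.
apply/eqP; rewrite -subr_eq mulrC; apply/eqP.
apply: (@additive_lipschitz_linear (fun u => s u - s 0) K) => [v w | v] /=.
  by have := s_shift v w; lra.
by have := sK v 0; rewrite subr0.
Qed.

Lemma exists_moment_neq0 (L : seq (R * R)) (tau : R) :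
  \sum_(p <- L | p.2 == tau) p.1 != 0 ->
  exists m, \sum_(p <- L) p.1 * p.2 ^+ m != 0.
Proof.
move=> mass_neq0; apply: contrapT => all_eq0.
have moment_eq0 m : \sum_(p <- L) p.1 * p.2 ^+ m = 0.
  by apply/eqP/negPn/negP => ?; apply: all_eq0; exists m.
pose P := \prod_(q <- L | q.2 != tau) ('X - q.2%:P).
have P_eq0 : \sum_(p <- L) p.1 * P.[p.2] = 0.
  under eq_bigr do rewrite horner_coef big_distrr /=.
  rewrite exchange_big /=; apply: big1 => i _.
  transitivity (P`_i * \sum_(p <- L) p.1 * p.2 ^+ i); last by rewrite moment_eq0 mulr0.
  by rewrite big_distrr; apply: eq_bigr => p _ /=; rewrite mulrCA mulrA.
have P_mass : \sum_(p <- L) p.1 * P.[p.2] = P.[tau] * \sum_(p <- L | p.2 == tau) p.1.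
  rewrite big_distrr /= [in RHS]big_mkcond /=; apply: eq_big_seq => p pL.
  case: eqP => [-> | p_tau]; first by rewrite mulrC.
  apply/eqP; rewrite mulf_eq0 horner_prod prodf_seq_eq0; apply/orP; right.
  apply/hasP; exists p => //; rewrite hornerXsubC subrr eqxx andbT.
  exact/eqP.
have P_tau : P.[tau] != 0.
  rewrite horner_prod prodf_seq_neq0; apply/allP => q _; apply/implyP => q_tau.
  by rewrite hornerXsubC subr_eq0 eq_sym.
by move: P_eq0; rewrite P_mass => /eqP; rewrite mulf_eq0 (negPf P_tau) (negPf mass_neq0).
Qed.

Lemma annihilated_mass_eq0 (s : R -> R) (L : seq (R * R)) :
  lipschitz_fun s -> ~ affine_fun s -> annihilates L s ->
  forall tau, \sum_(p <- L | p.2 == tau) p.1 = 0.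
Proof.
move=> s_lip s_naff sL tau; apply/eqP/negPn/negP => /exists_moment_neq0 [m Lm].
apply: s_naff; apply: lipschitz_shift_affine => // u h.
have hsL : annihilates L (fdiff h s).
  move=> a b; rewrite /fdiff; under eq_bigr do rewrite mulrBr -addrA.
  by rewrite sumrB !sL subrr.
have := @fdiffs_eq0_const m (fdiff h s) _ _ u; rewrite /fdiff add0r; apply.
  have [K sK] := s_lip; exists (K * `|h|) => v.
  by have := sK (v + h) v; rewrite addrAC subrr add0r.
move=> hs size_hs v.
have := annihilates_fdiffs hs (continuous_fdiff (lipschitz_continuous s_lip)) hsL 0 v.
rewrite size_hs iter_mulX big_map /=; under eq_bigr do rewrite mul0r add0r.
by rewrite -big_distrl /= => /eqP; rewrite mulf_eq0 (negPf Lm) => /eqP.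
Qed.

End Annihilation.

Section RidgeSpan.
Context {R : realType} (s : R -> R).

Definition ridge_span (h : R -> R) := exists T : seq (R * R * R),
  forall x, h x = \sum_(q <- T) q.1.1 * s (q.1.2 * x + q.2).

Lemma eq_ridge_span (f g : R -> R) : f =1 g -> ridge_span f -> ridge_span g.
Proof. by move=> fg [T fT]; exists T => x; rewrite -fg fT. Qed.

Lemma ridge_span0 : ridge_span (fun=> 0).
Proof. by exists [::] => x; rewrite big_nil. Qed.

Lemma ridge_span_ridge (a b : R) : ridge_span (fun x => s (a * x + b)).
Proof. by exists [:: (1, a, b)] => x; rewrite big_seq1 mul1r. Qed.

Lemma ridge_spanD (f g : R -> R) :
  ridge_span f -> ridge_span g -> ridge_span (fun x => f x + g x).
Proof. by move=> [T fT] [T' gT']; exists (T ++ T') => x; rewrite big_cat fT gT'. Qed.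

Lemma ridge_spanZ (k : R) (f : R -> R) : ridge_span f -> ridge_span (fun x => k * f x).
Proof.
move=> [T fT]; exists [seq (k * q.1.1, q.1.2, q.2) | q <- T] => x.
by rewrite big_map fT big_distrr; apply: eq_bigr => q _ /=; rewrite mulrA.
Qed.

Lemma ridge_span_sum (I : Type) (r : seq I) (F : I -> R -> R) :
  (forall i, ridge_span (F i)) -> ridge_span (fun x => \sum_(i <- r) F i x).
Proof.
move=> FV; elim: r => [|i r IH].
  by apply: eq_ridge_span ridge_span0 => x; rewrite big_nil.
by apply: eq_ridge_span (ridge_spanD (FV i) IH) => x; rewrite big_cons.
Qed.

Hypotheses (s_lip : lipschitz_fun s) (s_naff : ~ affine_fun s).

Lemma ridge_span_separate (S : seq R) (t0 : R) : uniq S -> t0 \notin S ->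
  (forall C : R -> R, exists h, ridge_span h /\ {in S, h =1 C}) ->
  exists g, [/\ ridge_span g, {in S, g =1 fun=> 0} & g t0 = 1].
Proof.
(* Otherwise, with G_tau the Lagrange basis on S, the functional
   f |-> f t0 - sum_tau G_tau t0 f tau kills the span, giving mass 1 at t0. *)
move=> S_uniq t0S S_interp; apply: contrapT => no_sep.
have sep_fail f : ridge_span f -> {in S, f =1 fun=> 0} -> f t0 = 0.
  move=> fV fS; apply/eqP/negPn/negP => ft0; apply: no_sep.
  exists (fun x => (f t0)^-1 * f x); split; first exact: ridge_spanZ.
    by move=> t tS; rewrite /= [f t]fS //= mulr0.
  by rewrite mulVf.
have [G GS] := choice (fun tau => S_interp (fun t => (tau == t)%:R)).
have sL : annihilates ((1, t0) :: [seq (- G tau t0, tau) | tau <- S]) s.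
  move=> a b; pose f x := s (a * x + b) - \sum_(tau <- S) s (a * tau + b) * G tau x.
  have fV : ridge_span f.
    apply: ridge_spanD; first exact: ridge_span_ridge.
    apply: eq_ridge_span (ridge_spanZ (-1) (ridge_span_sum S _)) => [x|tau].
      by rewrite mulN1r.
    exact: ridge_spanZ (GS tau).1.
  have fS : {in S, f =1 fun=> 0}.
    move=> t tS; apply/eqP; rewrite subr_eq0; apply/eqP.
    rewrite (bigD1_seq t) //= (GS t).2 // eqxx mulr1 big1_seq ?addr0 //.
    by move=> tau /andP[tau_t tauS]; rewrite (GS tau).2 // (negPf tau_t) mulr0.
  rewrite big_cons big_map /= mul1r -[RHS](sep_fail f fV fS) /f -sumrN.
  by congr (_ + _); apply: eq_bigr => tau _; rewrite mulNr mulrC.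
have := annihilated_mass_eq0 s_lip s_naff sL t0.
rewrite big_cons /= eqxx big_map big1_seq ?addr0 => [/eqP|tau /andP[/= /eqP ->]].
  by rewrite oner_eq0.
by rewrite (negPf t0S).
Qed.

Lemma ridge_span_interpolate (S : seq R) : uniq S ->
  forall C : R -> R, exists h, ridge_span h /\ {in S, h =1 C}.
Proof.
elim: S => [|t0 S IH] /=.
  by move=> _ C; exists (fun=> 0); split; first exact: ridge_span0.
move=> /andP[t0S S_uniq] C; have [h [hV hC]] := IH S_uniq C.
have [g [gV gS g1]] := ridge_span_separate S_uniq t0S (IH S_uniq).
exists (fun x => h x + (C t0 - h t0) * g x); split.
  by apply: ridge_spanD => //; exact: ridge_spanZ.
move=> t; rewrite inE => /predU1P[-> | tS]; first by rewrite g1 mulr1 addrC subrK.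
by rewrite gS // mulr0 addr0 hC.
Qed.

End RidgeSpan.

Section Flows.
Context {R : realType} {d : nat}.
Implicit Types (F : set ('cV[R]_d -> 'cV[R]_d)) (g : 'cV[R]_d -> 'cV[R]_d).

Lemma in_AF_comp F (f1 f2 : 'cV[R]_d -> 'cV[R]_d) :
  in_AF F f1 -> in_AF F f2 -> in_AF F (f2 \o f1).
Proof.
move=> F1; elim=> [g t phi Fg t0 phi_g | psi g t phi _ F_psi Fg t0 phi_g].
  exact: AF_comp F1 Fg t0 phi_g.
exact: AF_comp F_psi Fg t0 phi_g.
Qed.

Lemma time_flow_straight g (t : R) : (forall x (s : R), g (x + s *: g x) = g x) ->
  time_flow g t (fun x => x + t *: g x).
Proof.
move=> g_const x; exists (fun s => x + s *: g x); split; first by rewrite scale0r addr0.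
split=> // s0; rewrite g_const.
have gx' : is_derive s0 1 (fun s : R => s *: g x) (g x).
  apply: DeriveDef; first exact/diff_derivable/ex_diff.
  by rewrite deriveE ?diff_val ?scale1r //; exact: ex_diff.
by apply: is_derive_eq; rewrite add0r.
Qed.

End Flows.

Section Shears.
Context {R : realType} {d : nat}.

Definition shear (k j : 'I_d) (h : R -> R) (x : 'cV[R]_d) : 'cV[R]_d :=
  x + h (x j 0) *: delta_mx k 0.

Lemma coord_add_delta (k j : 'I_d) (c : R) (x : 'cV[R]_d) : j != k ->
  (x + c *: delta_mx k 0) j 0 = x j 0.
Proof. by move=> jk; rewrite !mxE (negPf jk) mulr0 addr0. Qed.

Lemma shear_comp (k j : 'I_d) h1 h2 x : j != k ->
  shear k j h2 (shear k j h1 x) = shear k j (fun t => h1 t + h2 t) x.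
Proof. by move=> jk; rewrite /shear coord_add_delta // scalerDl addrA. Qed.

Lemma mul_delta_diag_col (k : 'I_d) (v : 'cV[R]_d) :
  delta_mx k k *m v = v k 0 *: delta_mx k 0.
Proof.
rewrite -(mul_delta_mx (0 : 'I_1) k k) -mulmxA -rowE [row k v]mx11_scalar mxE.
by rewrite mul_mx_scalar.
Qed.

Lemma mulmx_row_delta (k j : 'I_d) (a : R) (A : 'M[R]_d) (x : 'cV[R]_d) :
  row k A = a *: delta_mx 0 j -> (A *m x) k 0 = a * x j 0.
Proof.
move=> rA; have -> : (A *m x) k 0 = (row k A *m x) 0 0 by rewrite -row_mul [RHS]mxE.
by rewrite rA -scalemxAl -rowE !mxE.
Qed.

Variables (sg : R -> R) (AA : set 'M[R]_d).
Hypothesis AA_rows :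
  forall l : 'I_d, [set v : 'rV[R]_d | exists A, AA A /\ row l A = v] = setT.

Lemma ridge_field_in_family (k j : 'I_d) (al a b : R) :
  ctrl_family sg AA (fun x => (al * sg (a * x j 0 + b)) *: delta_mx k 0).
Proof.
have [A [AA_A rowA]] : [set v | exists A, AA A /\ row k A = v] (a *: delta_mx 0 j).
  by rewrite AA_rows.
exists (al *: delta_mx k k), A, (const_mx b); split; last split => //.
  apply/is_diag_mxP => i l il; rewrite !mxE.
  have [ik|] := eqVneq i k; last by rewrite mulr0.
  by case: (l =P k) => [lk | _]; [rewrite lk ik eqxx in il | rewrite andbF mulr0].
rewrite funeqE => x; rewrite -scalemxAl mul_delta_diag_col scalerA.
by rewrite -(mulmx_row_delta x rowA) !mxE.
Qed.

Lemma shear_ridge_in_AF (k j : 'I_d) (al a b : R) : j != k ->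
  in_AF (ctrl_family sg AA) (shear k j (fun t => al * sg (a * t + b))).
Proof.
move=> jk; apply: AF_flow (ridge_field_in_family k j al a b) ler01 _.
have -> : shear k j (fun t => al * sg (a * t + b)) =
    (fun x => x + 1 *: ((al * sg (a * x j 0 + b)) *: delta_mx k 0)).
  by apply/funext => x; rewrite scale1r.
by apply: time_flow_straight => x s; rewrite scalerA coord_add_delta.
Qed.

Lemma shear_span_in_AF (k j : 'I_d) (h : R -> R) : j != k ->
  ridge_span sg h -> in_AF (ctrl_family sg AA) (shear k j h).
Proof.
move=> jk [T hT]; have -> : shear k j h = shear k j (fun t =>
    \sum_(q <- T) q.1.1 * sg (q.1.2 * t + q.2)) by apply/funext => x; rewrite /shear hT.
elim: T {hT} => [|q T IH].
  have -> : shear k j (fun t => \sum_(q <- [::]) q.1.1 * sg (q.1.2 * t + q.2)) =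
      shear k j (fun t => 0 * sg (0 * t + 0)).
    by apply/funext => x; rewrite /shear big_nil mul0r.
  exact: shear_ridge_in_AF.
have -> : shear k j (fun t => \sum_(q <- q :: T) q.1.1 * sg (q.1.2 * t + q.2)) =
    shear k j (fun t => \sum_(q <- T) q.1.1 * sg (q.1.2 * t + q.2)) \o
    shear k j (fun t => q.1.1 * sg (q.1.2 * t + q.2)).
  by apply/funext => x /=; rewrite shear_comp // /shear big_cons.
exact: in_AF_comp (shear_ridge_in_AF _ _ _ jk) IH.
Qed.

End Shears.

Section Genericity.
Context {R : realType}.

Lemma exists_pos_notin (bad : seq R) (e : R) : 0 < e ->
  exists K, [/\ 0 < K, K <= e & K \notin bad].
Proof.
move=> e_gt0; pose S := \sum_(w <- bad) `|w|^-1.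
have S_ge0 : 0 <= S by rewrite sumr_ge0 // => w _; rewrite invr_ge0.
have den_gt0 : 0 < 1 + e * S by rewrite ltr_pwDl // mulr_ge0 // ltW.
(* K^-1 = e^-1 + S exceeds every |w|^-1 with w in bad. *)
pose K := e / (1 + e * S); exists K; split.
- exact: divr_gt0.
- by rewrite ler_pdivrMr // ler_peMr ?lerDl ?mulr_ge0 // ltW.
apply/negP => K_bad.
have : `|K|^-1 <= S.
  by rewrite /S (big_rem _ K_bad) /= lerDl sumr_ge0 // => w _; rewrite invr_ge0.
by rewrite gtr0_norm ?divr_gt0 // invf_div ler_pdivrMr // mulrC; lra.
Qed.

Lemma separating_scalar (I : finType) (u v : I -> R) (e : R) : 0 < e ->
  exists K, [/\ 0 < K, K <= e &
    forall i i', u i + K * v i = u i' + K * v i' -> u i = u i' /\ v i = v i'].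
Proof.
move=> e_gt0.
pose bad := [seq (u p.1 - u p.2) / (v p.2 - v p.1) | p <- enum {: I * I}].
have [K [K_gt0 K_le K_good]] := exists_pos_notin bad e_gt0.
exists K; split => // i i' E.
suff v_eq : v i = v i' by split => //; move: E; rewrite v_eq; lra.
apply/eqP/negPn/negP => v_neq; apply: (negP K_good); apply/mapP.
exists (i, i'); first by rewrite mem_enum.
have v_sub : v i' - v i != 0 by rewrite subr_eq0 eq_sym.
by rewrite /= -[K](mulfK v_sub) mulrBr; congr (_ / _); lra.
Qed.

Lemma injective_factor (I : finType) (T : eqType) (f : I -> T) (v : I -> R) :
  injective f -> exists C : T -> R, forall i, C (f i) = v i.
Proof.
move=> f_inj; exists (fun t => if [pick i | f i == t] is Some i then v i else 0) => i.
by case: pickP => [i' /eqP /f_inj -> // | /(_ i)]; rewrite eqxx.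
Qed.

End Genericity.

Section Reachability.
Context {R : realType} {d : nat} (sg : R -> R) (AA : set 'M[R]_d).
Hypotheses (AA_rows :
    forall l : 'I_d, [set v : 'rV[R]_d | exists A, AA A /\ row l A = v] = setT)
  (sg_lip : lipschitz_fun sg) (sg_naff : ~ affine_fun sg) (d_gt1 : (1 < d)%N).

Definition reachable (N : nat) (P Q : 'I_N -> 'cV[R]_d) :=
  exists2 phi, in_AF (ctrl_family sg AA) phi & forall i, phi (P i) = Q i.

Lemma reachable_trans N (P Q S : 'I_N -> 'cV[R]_d) :
  reachable P Q -> reachable Q S -> reachable P S.
Proof.
move=> [f1 f1_AF f1PQ] [f2 f2_AF f2QS]; exists (f2 \o f1); first exact: in_AF_comp.
by move=> i /=; rewrite f1PQ f2QS.
Qed.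

Lemma eq_reachable N (P Q Q' : 'I_N -> 'cV[R]_d) :
  reachable P Q -> Q =1 Q' -> reachable P Q'.
Proof. by move=> [phi phi_AF phiPQ] QQ'; exists phi => // i; rewrite phiPQ QQ'. Qed.

Lemma reachable_shear N (P : 'I_N -> 'cV[R]_d) (k j : 'I_d) (C : R -> R) : j != k ->
  reachable P (fun i => shear k j C (P i)).
Proof.
move=> jk.
have [h [hV hC]] :=
  ridge_span_interpolate sg_lip sg_naff (undup_uniq [seq P i j 0 | i <- enum 'I_N]) C.
exists (shear k j h); first exact: shear_span_in_AF.
by move=> i; rewrite /shear hC // mem_undup; apply: map_f; rewrite mem_enum.
Qed.

Lemma reachable_refl N (P : 'I_N -> 'cV[R]_d) : reachable P P.
Proof.
pose i0 : 'I_d := Ordinal (ltnW d_gt1); pose i1 : 'I_d := Ordinal d_gt1.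
have i10 : i1 != i0 by rewrite -val_eqE.
exists (shear i0 i1 (fun t => 0 * sg (0 * t + 0))); first exact: shear_ridge_in_AF.
by move=> i; rewrite /shear !mul0r scale0r addr0.
Qed.

Lemma reachable_injective_coord (k : 'I_d) N (x : 'I_N -> 'cV[R]_d) : injective x ->
  exists P, reachable x P /\ injective (fun i => P i k 0).
Proof.
(* After the coordinates in ls are processed, coordinate k holds
   x_k + sum_(l in ls) K_l x_l for generic scalars K_l. *)
move=> x_inj.
have sep (ls : seq 'I_d) : exists P, [/\ reachable x P,
    forall i (l : 'I_d), l != k -> P i l 0 = x i l 0 &
    forall i i', P i k 0 = P i' k 0 ->
      forall l : 'I_d, (l == k) || (l \in ls) -> x i l 0 = x i' l 0].
  elim: ls => [|l ls [P [xP Px P_sep]]].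
    exists x; split=> [|//|i i' E l]; first exact: reachable_refl.
    by rewrite orbF => /eqP ->.
  have [-> | lk] := eqVneq l k.
    exists P; split=> // i i' E l'; rewrite inE orbA orbb; exact: P_sep.
  have [K [_ _ K_sep]] := separating_scalar (fun i => P i k 0) (fun i => x i l 0) ltr01.
  exists (fun i => shear k l (fun t => K * t) (P i)); split.
  - exact: reachable_trans xP (reachable_shear _ _ lk).
  - by move=> i l' l'k; rewrite /shear coord_add_delta ?Px.
  move=> i i'; rewrite /shear !mxE !eqxx !mulr1 (Px i l lk) (Px i' l lk).
  move=> /K_sep [P_eq x_eq] l'; rewrite inE orbCA => /predU1P[-> // | ?].
  exact: P_sep.
have [P [xP _ P_sep]] := sep (enum 'I_d).
exists P; split => // i i' /P_sep x_eq; apply: x_inj; apply/matrixP => l z.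
by rewrite (ord1 z) x_eq // mem_enum orbT.
Qed.

Lemma reachable_of_injective_coord (j : 'I_d) N (P Q : 'I_N -> 'cV[R]_d) :
  injective (fun i => P i j 0) -> (forall i, Q i j 0 = P i j 0) -> reachable P Q.
Proof.
move=> P_inj QPj.
pose mix (ls : seq 'I_d) i := \col_(l < d) (if l \in ls then Q i l 0 else P i l 0).
have mix_j (ls : seq 'I_d) i : mix ls i j 0 = P i j 0 by rewrite mxE QPj; case: ifP.
have mixP (ls : seq 'I_d) : reachable P (mix ls).
  elim: ls => [|l ls IH].
    apply: (eq_reachable (reachable_refl P)) => i.
    by apply/matrixP => l z; rewrite (ord1 z) mxE.
  apply: reachable_trans IH _; have [-> | lj] := eqVneq l j.
    apply: (eq_reachable (reachable_refl _)) => i; apply/matrixP => l' z.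
    by rewrite (ord1 z) !mxE inE; case: eqVneq => // ->; rewrite QPj; case: ifP.
  have [C HC] := injective_factor (fun i => Q i l 0 - mix ls i l 0) P_inj.
  have jl : j != l by rewrite eq_sym.
  apply: (eq_reachable (reachable_shear (mix ls) C jl)) => i.
  apply/matrixP => l' z; rewrite (ord1 z) /shear mix_j HC /mix !mxE inE.
  have [-> | l'l] := eqVneq l' l; first by rewrite /= mulr1 addrC subrK.
  by rewrite /= mulr0 addr0.
apply: (eq_reachable (mixP (enum 'I_d))) => i.
by apply/matrixP => l z; rewrite (ord1 z) mxE mem_enum.
Qed.

End Reachability.

Lemma exists_perturbation_injective_coord {R : realType} {d : nat} (k : 'I_d) N
    (y : 'I_N -> 'cV[R]_d) (eps : R) : 0 < eps ->
  exists y' : 'I_N -> 'cV[R]_d,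
    injective (fun i => y' i k 0) /\ forall i l, `|y' i l 0 - y i l 0| <= eps.
Proof.
move=> eps_gt0; have N1_gt0 : 0 < N.+1%:R :> R by rewrite ltr0n.
have [del [del_gt0 del_le del_sep]] :=
  separating_scalar (fun i => y i k 0) (fun i : 'I_N => i%:R) (divr_gt0 eps_gt0 N1_gt0).
exists (fun i => y i + (del * i%:R) *: delta_mx k 0); split.
  move=> i i' /=; rewrite !mxE !eqxx !mulr1 => /del_sep [_ /eqP].
  by rewrite eqr_nat => /eqP /val_inj.
move=> i l; rewrite !mxE addrAC subrr add0r.
have del_i : del * i%:R <= eps.
  rewrite -(divfK (lt0r_neq0 N1_gt0) eps) ler_pM ?ler0n ?(ltW del_gt0) // ler_nat.
  exact: leq_trans (ltnW (ltn_ord i)) (leqnSn N).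
rewrite normrM ger0_norm ?mulr_ge0 ?ler0n ?(ltW del_gt0) //.
apply: le_trans del_i; apply: ler_piMr; first by rewrite mulr_ge0 ?ler0n ?(ltW del_gt0).
by case: (_ && _); rewrite ?normr0 ?normr1.
Qed.

Theorem corollary3p6 (R : realType) (d : nat) (sigma : R -> R)
    (AA : set 'M[R]_d) :
  (2 <= d)%N ->
  lipschitz_fun sigma ->
  ~ affine_fun sigma ->
  (forall l : 'I_d, [set v : 'rV[R]_d | exists A, AA A /\ row l A = v] = setT) ->
  universal_interpolation (ctrl_family sigma AA).
Proof.
(* The targets need not be distinct: they are perturbed anyway. *)
move=> d_gt1 s_lip s_naff AA_rows eps eps_gt0 N x y x_inj _.
pose i0 : 'I_d := Ordinal (ltnW d_gt1); pose i1 : 'I_d := Ordinal d_gt1.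
have i10 : i1 != i0 by rewrite -val_eqE.
have [y' [y'_inj y'_near]] := exists_perturbation_injective_coord i1 y eps_gt0.
have [P [xP P_inj]] := reachable_injective_coord AA_rows s_lip s_naff d_gt1 i0 x_inj.
pose Q i := \col_l (if l == i0 then P i i0 0 else y' i l 0).
have PQ : reachable sigma AA P Q.
  apply: (reachable_of_injective_coord AA_rows s_lip s_naff d_gt1 P_inj) => i.
  by rewrite mxE eqxx.
have Qy' : reachable sigma AA Q y'.
  apply: (reachable_of_injective_coord AA_rows s_lip s_naff d_gt1 (j := i1)).
    by move=> i i'; rewrite /= !mxE (negPf i10); exact: y'_inj.
  by move=> i; rewrite mxE (negPf i10).
have [phi phi_AF phi_y'] := reachable_trans xP (reachable_trans PQ Qy').
by exists phi; split => // i k; rewrite phi_y'.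
Qed.
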